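(* Let $u\in\mathcal F$ be a feasible flow. Then $u$ is implementable (i.e., there exists $\lambda\in\mathbb{R}^J_{\geq 0}$ with $u\in\mathrm{WE}(\lambda)$) if and only if $u$ is an optimal solution of the linear program \[ \min_{x\in\mathcal F}\ \sum_{(i,p)\in\mathcal P}\tau_{i,p}(u)\, x_{i,p}\quad\text{s.t.}\quad \sum_{(i,p)\in\mathcal P} g_{i,p,j}(u)\, x_{i,p}\le G_j(u)\ \text{ for all } j\in J. \]
   Context: Let $G=(V,E)$ be a directed graph and $I$ a finite set of commodities; commodity $i$ has source $s_i$, sink $t_i$ and demand $d_i>0$. $\mathcal P_i$ is the set of simple $s_i$–$t_i$ paths and $\mathcal P=\{(i,p): i\in I, p\in\mathcal P_i\}$. A flow is $x\in\mathbb{R}^{\mathcal P}_{\ge 0}$; it is feasible if $\sum_{p\in\mathcal P_i}x_{i,p}=d_i$ for all $i$; $\mathcal F$ is the set of feasible flows. $J$ is a finite set of externality classes with externality functions $g_{i,p,j}:\mathcal F\to\mathbb{R}_{\ge 0}$, and $G_j(x)=\sum_{(i,p)\in\mathcal P}g_{i,p,j}(x)\,x_{i,p}$. Travel time functions $\tau_{i,p}:\mathcal F\to\mathbb{R}$ are arbitrary. For $\lambda\in\mathbb{R}^J_{\ge0}$ the cost is $c^\lambda_{i,p}(x)=\tau_{i,p}(x)+\sum_{j\in J}\lambda_j g_{i,p,j}(x)$. A feasible flow $x$ is a Wardrop equilibrium w.r.t. $c^\lambda$ if for all $i\in I$, $p\in\mathcal P_i$: $x_{i,p}>0$ implies $c^\lambda_{i,p}(x)\le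 c^\lambda_{i,q}(x)$ for all $q\in\mathcal P_i$. $\mathrm{WE}(\lambda)$ denotes the set of such equilibria. *)

From HB Require Import structures.
From mathcomp Require Import all_boot all_order all_algebra.
From mathcomp Require Import reals.
Set Implicit Arguments. Unset Strict Implicit. Unset Printing Implicit Defensive.
Import Order.TTheory GRing.Theory Num.Theory.
Local Open Scope ring_scope.

(* A simple s-t path is represented by its (nonempty, duplicate-free) vertex
   sequence [:: s; ...; t] whose consecutive vertices are joined by edges. *)
Definition is_simple_path (V : finType) (E : rel V) (s t : V) (p : seq V) : bool :=
  match p with
  | [::] => false
  | x :: q => [&& x == s, last x q == t, path E x q & uniq p]
  end.

(* all vertex sequences of length at most #|V| (every simple path is among them) *)
Definition short_seqs (V : finType) : seq (seq V) :=
  flatten [seq [seq tval w | w : k.-tuple V] | k <- iota 0 #|V|.+1].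

Definition simple_paths (V : finType) (E : rel V) (s t : V) : seq (seq V) :=
  [seq p <- short_seqs V | is_simple_path E s t p].

Definition path_list (V I : finType) (E : rel V) (s t : I -> V) : seq (I * seq V) :=
  flatten [seq [seq (i, p) | p <- simple_paths E (s i) (t i)] | i <- enum I].

Definition Pidx (V I : finType) (E : rel V) (s t : I -> V) : finType :=
  seq_sub (path_list E s t).

Definition comm (V I : finType) (E : rel V) (s t : I -> V) (a : Pidx E s t) : I :=
  (ssval a).1.

Section Flows.
Variables (R : realType) (V I J : finType) (E : rel V) (s t : I -> V) (d : I -> R).
Local Notation P := (Pidx E s t).

Definition feasible (x : P -> R) : Prop :=
  (forall a, 0 <= x a) /\ (forall i : I, \sum_(a : P | comm a == i) x a = d i).

Variables (tau : (P -> R) -> P -> R) (g : (P -> R) -> P -> J -> R).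

Definition Gext (x : P -> R) (j : J) : R := \sum_(a : P) g x a j * x a.

Definition cost (lam : J -> R) (x : P -> R) (a : P) : R :=
  tau x a + \sum_(j : J) lam j * g x a j.

Definition wardrop (lam : J -> R) (x : P -> R) : Prop :=
  feasible x /\
  forall a b : P, comm a = comm b -> 0 < x a -> cost lam x a <= cost lam x b.

Definition implementable (u : P -> R) : Prop :=
  exists lam : J -> R, (forall j, 0 <= lam j) /\ wardrop lam u.

Definition LP_feasible (u x : P -> R) : Prop :=
  feasible x /\ forall j : J, \sum_(a : P) g u a j * x a <= Gext u j.

Definition LP_objective (u x : P -> R) : R := \sum_(a : P) tau u a * x a.

Definition LP_optimal (u : P -> R) : Prop :=
  LP_feasible u u /\ forall x, LP_feasible u x -> LP_objective u u <= LP_objective u x.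

End Flows.

(* (=>) At an equilibrium every commodity routes its flow on paths of minimal
   cost c^lam(u), so u minimises x |-> sum_a c^lam_a(u) x_a over feasible flows;
   splitting c^lam = tau + sum_j lam_j g_j and using lam >= 0 together with the
   load constraints of the LP yields optimality.
   (<=) Implementability is the feasibility of a finite linear system in lam:
   lam >= 0 and c^lam_a(u) <= c^lam_b(u) for every used path a and every path b
   of the same commodity.  If it is infeasible, Fourier-Motzkin elimination
   yields a nonnegative combination of these inequalities that reads
   0 <= (negative).  Each inequality c_a <= c_b corresponds to moving a unit of
   flow from a to b, so the combination is a direction that preserves demands,
   does not increase any load G_j and strictly decreases the travel time; a
   small step along it contradicts the optimality of u. *)

From HB Require Import structures.
From mathcomp Require Import all_boot all_order all_algebra.
From mathcomp Require Import reals ring lra.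
From Stdlib Require Import Classical_Prop.
Set Implicit Arguments. Unset Strict Implicit. Unset Printing Implicit Defensive.
Import Order.TTheory GRing.Theory Num.Theory.
Local Open Scope ring_scope.

Section FiniteFamilies.
Variables (R : realFieldType) (T : finType).

Lemma separating_value (P Q : pred T) (f h : T -> R) :
  (forall q p, P q -> Q p -> f q <= h p) ->
  exists v, (forall q, P q -> f q <= v) /\ (forall p, Q p -> v <= h p).
Proof.
move=> fh; case: (pickP P) => [q0 Pq0 | noP].
  case: (arg_maxP f Pq0) => q Pq q_max.
  by exists (f q); split=> [q' /q_max | p /(fh q) ->].
case: (pickP Q) => [p0 Qp0 | noQ].
  case: (arg_minP h Qp0) => p Qp p_min.
  by exists (h p); split=> [q | p' /p_min]; rewrite ?noP.
by exists 0; split=> [q | p]; rewrite ?noP ?noQ.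
Qed.

Lemma exists_nonneg_step (u z : T -> R) :
  (forall a, 0 <= u a) -> (forall a, u a <= 0 -> 0 <= z a) ->
  exists2 e, 0 < e & forall a, 0 <= u a + e * z a.
Proof.
move=> u_ge0 z_dir.
have ratio_gt0 a : z a < 0 -> 0 < u a / - z a.
  move=> za_lt0; rewrite divr_gt0 ?oppr_gt0 // ltNge.
  by apply: contraL za_lt0 => /z_dir; rewrite leNgt.
pose e := \big[Num.min/1]_(a | z a < 0) (u a / - z a).
have e_gt0 : 0 < e.
  apply: (big_ind (fun e => 0 < e)) => //.
  by move=> x y x_gt0 y_gt0; rewrite lt_min x_gt0.
exists e => // a; have [za_lt0 | za_ge0] := ltP (z a) 0.
  have : e <= u a / - z a by rewrite /e (bigD1 a) //= ge_min lexx.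
  rewrite ler_pdivlMr ?oppr_gt0 // mulrN; lra.
by rewrite addr_ge0 // mulr_ge0 // ltW.
Qed.

Lemma min_support_le_sum (A : pred T) (c u x : T -> R) :
  (forall a, 0 <= u a) -> (forall a, 0 <= x a) ->
  \sum_(a | A a) u a = \sum_(a | A a) x a -> 0 < \sum_(a | A a) u a ->
  (forall a b, A a -> A b -> 0 < u a -> c a <= c b) ->
  \sum_(a | A a) c a * u a <= \sum_(a | A a) c a * x a.
Proof.
move=> u_ge0 x_ge0 mass_eq mass_gt0 u_min.
rewrite -(ler_pM2l mass_gt0) {1}mass_eq !big_distrlr /= [leLHS]exchange_big /=.
apply: ler_sum => a Aa; apply: ler_sum => b Ab.
have [ua_gt0 | ua_le0] := ltP 0 (u a).
  rewrite (_ : x b * (c a * u a) = c a * (u a * x b)); last by ring.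
  rewrite (_ : u a * (c b * x b) = c b * (u a * x b)); last by ring.
  by apply: ler_wpM2r; [rewrite mulr_ge0 // ltW | exact: u_min].
have -> : u a = 0 by apply/le_anti; rewrite ua_le0 u_ge0.
by rewrite !(mulr0, mul0r).
Qed.

Lemma sum_mul_comb (F z1 z2 : T -> R) k1 k2 :
  \sum_a F a * (k1 * z1 a + k2 * z2 a) =
  k1 * \sum_a F a * z1 a + k2 * \sum_a F a * z2 a.
Proof.
rewrite !mulr_sumr -big_split; apply: eq_bigr => a _.
by rewrite mulrDr !(mulrCA (F a)).
Qed.

Lemma sum_mul_delta (F : T -> R) b : \sum_x F x * (x == b)%:R = F b.
Proof.
by under eq_bigr do rewrite mulr_natr mulrb; rewrite -big_mkcond big_pred1_eq.
Qed.

Definition unit_shift (a b : T) : T -> R := fun x => (x == b)%:R - (x == a)%:R.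

Lemma sum_mul_shift (F : T -> R) a b : \sum_x F x * unit_shift a b x = F b - F a.
Proof. by under eq_bigr do rewrite mulrBr; rewrite sumrB !sum_mul_delta. Qed.

End FiniteFamilies.

Section FourierMotzkin.
Variables (R : realFieldType) (X : eqType).

Definition ineq := ((X -> R) * R)%type.

Definition ineq_lhs (xs : seq X) (c : ineq) (lam : X -> R) : R :=
  \sum_(x <- xs) c.1 x * lam x.

Definition satisfies (xs : seq X) (lam : X -> R) (c : ineq) : bool :=
  ineq_lhs xs c lam <= c.2.

Definition ineq_comb (k1 k2 : R) (c1 c2 : ineq) : ineq :=
  (fun x => k1 * c1.1 x + k2 * c2.1 x, k1 * c1.2 + k2 * c2.2).

Definition conic (C : ineq -> Prop) : Prop :=
  forall k1 k2 c1 c2, 0 <= k1 -> 0 <= k2 -> C c1 -> C c2 ->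
  C (ineq_comb k1 k2 c1 c2).

Definition eliminate (x : X) (cp cq : ineq) : ineq :=
  ineq_comb (- cq.1 x) (cp.1 x) cp cq.

Lemma ineq_lhs_comb xs k1 k2 c1 c2 lam :
  ineq_lhs xs (ineq_comb k1 k2 c1 c2) lam =
  k1 * ineq_lhs xs c1 lam + k2 * ineq_lhs xs c2 lam.
Proof.
rewrite /ineq_lhs !mulr_sumr -big_split; apply: eq_bigr => x _ /=.
by rewrite mulrDl !mulrA.
Qed.

Lemma ineq_lhs_cons xs c lam x v : x \notin xs ->
  ineq_lhs (x :: xs) c [eta lam with x |-> v] = c.1 x * v + ineq_lhs xs c lam.
Proof.
move=> xNxs; rewrite /ineq_lhs big_cons /= eqxx; congr (_ + _).
by apply: eq_big_seq => y y_xs; case: eqP y_xs => // ->; rewrite (negbTE xNxs).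
Qed.

Lemma eliminate_extend (K : finType) (c : K -> ineq) x xs lam : x \notin xs ->
  (forall k, (c k).1 x = 0 -> satisfies xs lam (c k)) ->
  (forall p q, 0 < (c p).1 x -> (c q).1 x < 0 ->
     satisfies xs lam (eliminate x (c p) (c q))) ->
  exists v, forall k, satisfies (x :: xs) [eta lam with x |-> v] (c k).
Proof.
move=> xNxs sat_zero sat_elim.
pose slack k := ((c k).2 - ineq_lhs xs (c k) lam) / (c k).1 x.
have slackE k : (c k).1 x != 0 ->
    slack k * (c k).1 x = (c k).2 - ineq_lhs xs (c k) lam.
  by move=> ?; rewrite divfK.
have [v [lo hi]] : exists v, (forall q, (c q).1 x < 0 -> slack q <= v) /\
                             (forall p, 0 < (c p).1 x -> v <= slack p).
  apply: separating_value => q p q_neg p_pos.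
  have := sat_elim p q p_pos q_neg; rewrite /satisfies ineq_lhs_comb /=.
  have := slackE p (lt0r_neq0 p_pos); have := slackE q (ltr0_neq0 q_neg).
  have : (c p).1 x * (c q).1 x < 0 by rewrite pmulr_rlt0.
  nra.
exists v => k; rewrite /satisfies ineq_lhs_cons //.
have [k_neg | k_pos | k_zero] := ltgtP ((c k).1 x) 0.
- have := lo k k_neg; have := slackE k (ltr0_neq0 k_neg); nra.
- have := hi k k_pos; have := slackE k (lt0r_neq0 k_pos); nra.
- by rewrite k_zero mul0r add0r; apply: sat_zero.
Qed.

(* Quantifying over every conic [C] containing the system is an impredicative
   way of asserting that [e] is a nonnegative combination of its inequalities. *)
Theorem fourier_motzkin (xs : seq X) : uniq xs ->
  forall (K : finType) (c : K -> ineq) (C : ineq -> Prop),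
  ~ (exists lam, forall k, satisfies xs lam (c k)) ->
  conic C -> (forall k, C (c k)) ->
  exists2 e, C e & (forall x, x \in xs -> e.1 x = 0) /\ e.2 < 0.
Proof.
elim: xs => [_ | x xs IH /andP [xNxs xs_uniq]] K c C infeasible C_conic C_c.
  have /forallPn [k] : ~~ [forall k, satisfies [::] (fun=> 0) (c k)].
    by apply/forallP => sat; apply: infeasible; exists (fun=> 0).
  by rewrite /satisfies /ineq_lhs big_nil -ltNge => ck_neg; exists (c k).
pose K' := ({k : K | (c k).1 x == 0} +
            {pq : K * K | (0 < (c pq.1).1 x) && ((c pq.2).1 x < 0)})%type.
pose c' (k : K') := match k with
  | inl k0 => c (val k0)
  | inr pq => eliminate x (c (val pq).1) (c (val pq).2)
  end.
have [|||e [Ce ex_0] [exs_0 e_neg]] :=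
  IH xs_uniq K' c' (fun e => C e /\ e.1 x = 0).
- move=> [lam sat']; apply: infeasible.
  have [||v sat] := eliminate_extend (c := c) (lam := lam) xNxs.
  + by move=> k /eqP ck_0; apply: (sat' (inl (exist _ k ck_0))).
  + move=> p q p_pos q_neg.
    have pq : (0 < (c (p, q).1).1 x) && ((c (p, q).2).1 x < 0) by rewrite p_pos q_neg.
    exact: (sat' (inr (exist _ (p, q) pq))).
  by exists [eta lam with x |-> v].
- move=> k1 k2 e1 e2 k1_ge0 k2_ge0 [Ce1 e1x] [Ce2 e2x].
  by split; [exact: C_conic | rewrite /= e1x e2x !mulr0 addr0].
- case=> [[k /= /eqP ck_0] | [[p q] /= /andP [p_pos q_neg]]]; first by split.
  split; first by apply: C_conic => //; rewrite ?oppr_ge0 ltW.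
  by rewrite /= mulNr mulrC addNr.
- by exists e => //; split=> // y; rewrite in_cons => /predU1P [-> | /exs_0].
Qed.

End FourierMotzkin.

Section Implementability.
Variables (R : realType) (V I J : finType) (E : rel V) (s t : I -> V) (d : I -> R).
Local Notation P := (Pidx E s t).
Variables (tau : (P -> R) -> P -> R) (g : (P -> R) -> P -> J -> R).

Lemma sum_cost_mul lam u x :
  \sum_a cost tau g lam u a * x a =
  LP_objective tau u x + \sum_j lam j * \sum_a g u a j * x a.
Proof.
rewrite /cost /LP_objective; under eq_bigr do rewrite mulrDl.
rewrite big_split /=; congr (_ + _); under eq_bigr do rewrite mulr_suml.
rewrite exchange_big /=; apply: eq_bigr => j _.
by rewrite mulr_sumr; apply: eq_bigr => a _; rewrite mulrA.
Qed.

Lemma wardrop_LP_optimal (hd : forall i, 0 < d i) lam u :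
  (forall j, 0 <= lam j) -> wardrop d tau g lam u -> LP_optimal d tau g u.
Proof.
move=> lam_ge0 [[u_ge0 u_dem] u_eq]; split=> [|x [[x_ge0 x_dem] x_load]].
  by split=> //; split.
have cost_le : \sum_a cost tau g lam u a * u a <= \sum_a cost tau g lam u a * x a.
  rewrite !(partition_big (fun a : P => comm a) predT) //=.
  apply: ler_sum => i _; apply: min_support_le_sum => //; rewrite ?u_dem ?x_dem //.
  by move=> a b /eqP ai /eqP bi; apply: u_eq; rewrite ai bi.
have load_le :
    \sum_j lam j * \sum_a g u a j * x a <= \sum_j lam j * \sum_a g u a j * u a.
  by apply: ler_sum => j _; exact: ler_wpM2l (x_load j).
move: cost_le; rewrite !sum_cost_mul; lra.
Qed.

Definition demand_neutral (z : P -> R) : Prop :=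
  forall i, \sum_(a | comm a == i) z a = 0.

Section LPOptimalImplementable.
Variable u : P -> R.
Hypothesis u_feasible : feasible d u.

Lemma LP_optimal_no_descent (u_opt : LP_optimal d tau g u) (z : P -> R) :
  demand_neutral z -> (forall a, u a <= 0 -> 0 <= z a) ->
  (forall j, \sum_a g u a j * z a <= 0) -> 0 <= \sum_a tau u a * z a.
Proof.
move=> z_neutral z_dir z_load; have [u_ge0 u_dem] := u_feasible.
have [e e_gt0 step_ge0] := exists_nonneg_step u_ge0 z_dir.
have sum_step (F : P -> R) :
    \sum_a F a * (u a + e * z a) = \sum_a F a * u a + e * \sum_a F a * z a.
  by rewrite mulr_sumr -big_split; apply: eq_bigr => a _; rewrite mulrDr mulrCA.
have step_feasible : LP_feasible d g u (fun a => u a + e * z a).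
  split; [split=> // i | move=> j].
    by rewrite big_split /= -mulr_sumr z_neutral mulr0 addr0 u_dem.
  rewrite sum_step /Gext; have := z_load j; nra.
have := u_opt.2 _ step_feasible; rewrite /LP_objective sum_step; nra.
Qed.

Local Notation used_pair := {ab : P * P | (0 < u ab.1) && (comm ab.1 == comm ab.2)}.

(* [inl (a, b)] encodes c^lam_a(u) <= c^lam_b(u) for a used path [a] and a
   path [b] of the same commodity; [inr j] encodes lam_j >= 0. *)
Definition wardrop_system (k : used_pair + J) : ineq R J :=
  match k with
  | inl ab => let: (a, b) := val ab in
              (fun j => g u a j - g u b j, tau u b - tau u a)
  | inr j => (fun j' => - (j' == j)%:R, 0)
  end.

Lemma wardrop_system_implementable lam :
  (forall k, satisfies (index_enum J) lam (wardrop_system k)) ->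
  implementable d tau g u.
Proof.
move=> sat; exists lam; split=> [j | ].
  have := sat (inr j); rewrite /satisfies /ineq_lhs /=.
  under eq_bigr do rewrite mulNr mulrC.
  by rewrite sumrN sum_mul_delta oppr_le0.
split=> // a b ab_comm ua_gt0.
have ab_used : (0 < u (a, b).1) && (comm (a, b).1 == comm (a, b).2).
  by rewrite ua_gt0 ab_comm eqxx.
have := sat (inl (exist _ (a, b) ab_used)); rewrite /satisfies /ineq_lhs /= /cost.
under eq_bigr do rewrite mulrBl ![_ * lam _]mulrC.
rewrite sumrB; lra.
Qed.

Definition direction_bounded (c : ineq R J) : Prop :=
  exists z : P -> R, [/\ demand_neutral z, forall a, u a <= 0 -> 0 <= z a,
    forall j, \sum_a g u a j * z a <= - c.1 j & \sum_a tau u a * z a <= c.2].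

Lemma direction_bounded_conic : conic direction_bounded.
Proof.
move=> k1 k2 c1 c2 k1_ge0 k2_ge0 [z1 [n1 d1 g1 t1]] [z2 [n2 d2 g2 t2]].
exists (fun a => k1 * z1 a + k2 * z2 a); split.
- by move=> i; rewrite big_split /= -!mulr_sumr n1 n2 !mulr0 addr0.
- by move=> a ua_le0; rewrite addr_ge0 // mulr_ge0 ?d1 ?d2.
- move=> j; rewrite sum_mul_comb /=; have := g1 j; have := g2 j; nra.
- rewrite sum_mul_comb /=; nra.
Qed.

Lemma direction_bounded_system k : direction_bounded (wardrop_system k).
Proof.
case: k => [[[a b] /= /andP [ua_gt0 /eqP ab_comm]] | j].
  exists (unit_shift R a b); split=> /= [i | x ux_le0 | j | ].
  - rewrite big_mkcond /=; under eq_bigr do rewrite -mulrb -mulr_natl.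
    by rewrite sum_mul_shift ab_comm subrr.
  - have xNa : (x == a) = false by apply: contraTF ux_le0 => /eqP ->; rewrite -ltNge.
    by rewrite /unit_shift xNa subr0 ler0n.
  - by rewrite sum_mul_shift opprB.
  - by rewrite sum_mul_shift.
exists (fun=> 0); split=> [i | // | j' | ].
- by rewrite big1.
- by rewrite big1 => [|a _]; rewrite /= ?opprK ?ler0n ?mulr0.
- by rewrite big1 => [|a _]; rewrite /= ?mulr0.
Qed.

Lemma LP_optimal_implementable : LP_optimal d tau g u -> implementable d tau g u.
Proof.
move=> u_opt.
have [[lam sat] | infeasible] :=
  classic (exists lam, forall k, satisfies (index_enum J) lam (wardrop_system k)).
  exact: wardrop_system_implementable sat.
have [c [z [z_neutral z_dir z_load z_time]] [c_0 c_neg]] := fourier_motzkin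
  (index_enum_uniq J) infeasible direction_bounded_conic direction_bounded_system.
have z_load0 j : \sum_a g u a j * z a <= 0.
  by have := z_load j; rewrite c_0 ?mem_index_enum // oppr0.
have := LP_optimal_no_descent u_opt z_neutral z_dir z_load0; lra.
Qed.
End LPOptimalImplementable.

End Implementability.

Theorem theorem3p2 (R : realType) (V : finType) (E : rel V) (I : finType)
  (s t : I -> V) (d : I -> R) (hd : forall i, 0 < d i) (J : finType)
  (tau : (Pidx E s t -> R) -> Pidx E s t -> R)
  (g : (Pidx E s t -> R) -> Pidx E s t -> J -> R)
  (hg : forall x, feasible d x -> forall a j, 0 <= g x a j)
  (u : Pidx E s t -> R) (hu : feasible d u) :
  implementable d tau g u <-> LP_optimal d tau g u.
Proof.
split=> [[lam [lam_ge0 u_wardrop]] | ].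
  exact: (wardrop_LP_optimal hd lam_ge0 u_wardrop).
exact: LP_optimal_implementable hu.
Qed.
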